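(* Let $\mathscr{G}$ be a graph class of asymptotic dimension at most $d$ with $d$-dimensional control function $f$. For every $G\in\mathscr{G}$ with $n$ vertices and every integer $r\ge1$, there exist sets $C_0,C_1,\dots,C_d\subseteq V(G)$ with $C_0\cup\dots\cup C_d=V(G)$ such that (i) for every $i$, every connected component of $G^r[C_i]$ has weak diameter in $G$ at most $f(3r)+2r$, and (ii) for every $i\in\{0,\dots,d\}$, $|C_i|\ge\lfloor n/(d+1)\rfloor$.
   Context: $G^r$ is the graph on $V(G)$ in which two vertices are adjacent iff their distance in $G$ is at most $r$. The weak diameter in $G$ of $Z\subseteq V(G)$ is the maximum $G$-distance between two vertices of $Z$. A class $\mathscr{G}$ has asymptotic dimension at most $d$ with $d$-dimensional control function $f:\mathbb{N}\to\mathbb{N}$ if for every $G\in\mathscr{G}$ and integer $r\ge1$ the vertices of $G$ can be coloured with $d+1$ colours so that any two vertices in the same connected component of the subgraph of $G^r$ induced by one colour class are at distance at most $f(r)$ in $G$. *)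

(* A (finite simple) graph is a symmetric irreflexive
   relation e : rel T on a finType T; V(G) = T. *)
From mathcomp Require Import all_boot.
Set Implicit Arguments. Unset Strict Implicit. Unset Printing Implicit Defensive.

Definition dist_le (T : finType) (e : rel T) (k : nat) (x y : T) : Prop :=
  exists p : seq T, [/\ path e x p, last x p = y & size p <= k].

(* x and y lie in the same connected component of G^r[C]: there is a
   sequence of vertices of C from x to y, consecutive ones at G-distance
   at most r. *)
Definition same_comp_pow (T : finType) (e : rel T) (r : nat) (C : {set T})
    (x y : T) : Prop :=
  exists p : seq T,
    [/\ x \in C, all (fun z => z \in C) p, last x p = y &
        forall i, i < size p -> dist_le e r (nth x (x :: p) i) (nth x p i)].

Definition graph_class := forall T : finType, rel T -> Prop.

Definition asdim_le (cls : graph_class) (d : nat) (f : nat -> nat) : Prop :=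
  forall (T : finType) (e : rel T), cls T e ->
  forall r : nat, 1 <= r ->
  exists c : T -> 'I_d.+1,
    forall x y : T, c x = c y ->
      same_comp_pow e r [set z | c z == c x] x y -> dist_le e (f r) x y.

(* Colour V(G) by the control colouring at scale 3r and fix a colour i.  If the
   r-neighbourhood N of the colour class A_i has at least n/(d+1) vertices, take
   C_i = N: sending every vertex of N to a nearby vertex of A_i maps r-components
   of N into 3r-components of A_i, so their diameter grows by at most 2r.
   Otherwise the complement of N, which misses A_i, has more than d(n/(d+1) - 1)
   vertices spread over the d other classes, so some A_j \ N has at least
   n/(d+1) of them; take C_i = A_i u (A_j \ N), whose two parts are more than r
   apart, so each r-component lies inside a single colour class. *)
From mathcomp Require Import all_boot zify boolp.
From Stdlib Require Import Relation_Operators Operators_Properties.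
Set Implicit Arguments. Unset Strict Implicit.

Lemma clos_rt_sym (A : Type) (R : A -> A -> Prop) : (forall x y, R x y -> R y x) ->
  forall x y, clos_refl_trans A R x y -> clos_refl_trans A R y x.
Proof.
move=> R_sym x y; elim=> [x0 y0 /R_sym|x0|x0 y0 z0 _ IHxy _ IHyz].
- exact: rt_step.
- exact: rt_refl.
- exact: rt_trans IHyz IHxy.
Qed.

Lemma clos_rt_map (A B : Type) (R : A -> A -> Prop) (R' : B -> B -> Prop) (g : A -> B) :
  (forall x y, R x y -> R' (g x) (g y)) ->
  forall x y, clos_refl_trans A R x y -> clos_refl_trans B R' (g x) (g y).
Proof.
move=> gRR' x y; elim=> [x0 y0 /gRR'|x0|x0 y0 z0 _ IHxy _ IHyz].
- exact: rt_step.
- exact: rt_refl.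
- exact: rt_trans IHxy IHyz.
Qed.

Definition colour_class (T : finType) (I : eqType) (c : T -> I) k := [set x | c x == k].

Lemma colour_classE (T : finType) (I : eqType) (c : T -> I) k x :
  (x \in colour_class c k) = (c x == k).
Proof. by rewrite inE. Qed.

Lemma large_class_outside (T : finType) d (c : T -> 'I_d.+1) (N : {set T}) i :
  colour_class c i \subset N -> #|N| < #|T| %/ d.+1 ->
  exists j, #|T| %/ d.+1 <= #|colour_class c j :\: N|.
Proof.
move=> sub_iN smallN; set q := #|T| %/ d.+1 in smallN *.
have [j large_j|small_out] := pickP (fun j => q <= #|colour_class c j :\: N|).
  by exists j.
have out_i : #|colour_class c i :\: N| = 0.
  by apply/eqP; rewrite cards_eq0 setD_eq0.
have cardC_sum : #|~: N| = \sum_j #|colour_class c j :\: N|.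
  rewrite -sum1_card (partition_big c xpredT) //=; apply: eq_bigr => j _.
  by rewrite -sum1_card; apply: eq_bigl => x; rewrite !inE andbC.
have cardC_le : #|~: N| <= d * q.-1.
  rewrite cardC_sum (bigD1 i) //= out_i add0n.
  apply: (@leq_trans (\sum_(j | j != i) q.-1)).
    by apply: leq_sum => j _; have := small_out j; rewrite /= leqNgt => /negbFE; lia.
  by rewrite sum_nat_const cardC1 card_ord.
exfalso; have := cardsC N; have := leq_divM #|T| d.+1; rewrite -/q.
by move: smallN cardC_le; clear small_out; clearbody q; case: q => [|q] /=; nia.
Qed.

Section Walks.
Variables (T : finType) (e : rel T).
Hypothesis e_sym : symmetric e.

Lemma dist_le_refl k x : dist_le e k x x.
Proof. by exists [::]. Qed.

Lemma dist_le_mono k k' x y : k <= k' -> dist_le e k x y -> dist_le e k' x y.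
Proof. by move=> lekk' [p [ep lp sp]]; exists p; split=> //; lia. Qed.

Lemma dist_le_trans k k' x y z :
  dist_le e k x y -> dist_le e k' y z -> dist_le e (k + k') x z.
Proof.
move=> [p [ep <- sp]] [q [eq lq sq]]; exists (p ++ q).
by rewrite cat_path last_cat ep eq size_cat; split=> //; lia.
Qed.

Lemma dist_le_sym k x y : dist_le e k x y -> dist_le e k y x.
Proof.
move=> [p [ep <- sp]]; exists (rev (belast x p)).
rewrite size_rev size_belast; split=> //.
- by rewrite rev_path -(eq_path e_sym).
- by case: p {ep sp} => //= z p; rewrite rev_cons last_rcons.
Qed.

Definition pow_edge r (C : {set T}) x y := [/\ x \in C, y \in C & dist_le e r x y].

Lemma same_comp_pow_cons r (C : {set T}) x y z : x \in C -> dist_le e r x y ->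
  same_comp_pow e r C y z -> same_comp_pow e r C x z.
Proof.
move=> xC dxy [p [yC pC lp dp]]; exists (y :: p); split=> //=; first by rewrite yC.
case=> [|i] //= ltip; have ltip' : i < size (y :: p) by exact: ltnW.
by rewrite (set_nth_default y x ltip) (set_nth_default y x ltip'); exact: dp.
Qed.

Lemma same_comp_powP r (C : {set T}) x y :
  same_comp_pow e r C x y <-> x \in C /\ clos_refl_trans T (pow_edge r C) x y.
Proof.
split.
  move=> [p [xC pC <- dp]]; split=> //; apply/clos_rt_rt1n_iff.
  elim: p x xC pC dp => [|z p IHp] x xC /=; first by move=> *; exact: rt1n_refl.
  move=> /andP[zC pC] dp; apply: Relation_Operators.rt1n_trans (IHp z zC pC _).
    by split=> //; exact: (dp 0).
  move=> i ltip; have ltip' : i < size (z :: p) by exact: ltnW.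
  by have := dp i.+1 ltip; rewrite /= (set_nth_default z x ltip) (set_nth_default z x ltip').
move=> [xC /clos_rt_rt1n_iff rxy]; elim: rxy xC => [x0 x0C | x0 y0 z0 [x0C y0C d0] _ IH _].
  by exists [::]; split.
exact: same_comp_pow_cons d0 (IH y0C).
Qed.

Lemma same_comp_pow_memr r (C : {set T}) x y : same_comp_pow e r C x y -> y \in C.
Proof.
move=> [p [xC pC <- _]]; have := mem_last x p; rewrite inE => /orP[/eqP-> //|].
exact: (allP pC).
Qed.

Lemma same_comp_pow_sym_trans r (C : {set T}) x u v :
  same_comp_pow e r C x u -> same_comp_pow e r C x v -> same_comp_pow e r C u v.
Proof.
move=> xu /same_comp_powP[_ rxv]; have uC := same_comp_pow_memr xu.
move: xu => /same_comp_powP[_ rxu].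
apply/same_comp_powP; split=> //; apply: rt_trans rxv; apply: clos_rt_sym rxu.
by move=> a b [aC bC dab]; split=> //; exact: dist_le_sym.
Qed.

Definition bounded_colouring (I : eqType) (c : T -> I) s D := forall x y, c x = c y ->
  same_comp_pow e s (colour_class c (c x)) x y -> dist_le e D x y.

Definition nbhd r (A : {set T}) := [set x | `[< exists2 a, a \in A & dist_le e r x a >]].

Lemma sub_nbhd r (A : {set T}) : A \subset nbhd r A.
Proof.
by apply/subsetP=> x xA; rewrite inE; apply/asboolP; exists x => //; exact: dist_le_refl.
Qed.

Section BoundedColouring.
Variables (I : eqType) (c : T -> I) (s D : nat).
Hypothesis c_bounded : bounded_colouring c s D.

Lemma monochromatic_closure x y :
  clos_refl_trans T (fun p q => c p = c q /\ dist_le e s p q) x y ->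
  c x = c y /\ clos_refl_trans T (pow_edge s (colour_class c (c x))) x y.
Proof.
elim=> [x0 y0 [cxy dxy]|x0|x0 y0 z0 _ [cxy rxy] _ [cyz ryz]].
- by split=> //; apply: rt_step; rewrite /pow_edge !colour_classE cxy.
- by split=> //; exact: rt_refl.
- by split; [rewrite cxy | apply: rt_trans rxy _; rewrite cxy].
Qed.

Lemma anchored_component_diam r t (S : {set T}) (a : T -> T) :
  (forall w, w \in S -> dist_le e t w (a w)) ->
  (forall x y, x \in S -> y \in S -> dist_le e r x y ->
    c (a x) = c (a y) /\ dist_le e s (a x) (a y)) ->
  forall x u v, same_comp_pow e r S x u -> same_comp_pow e r S x v ->
    dist_le e (D + 2 * t) u v.
Proof.
move=> near_a close_a x u v xu xv.
have /same_comp_powP[uS ruv] := same_comp_pow_sym_trans xu xv.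
have vS := same_comp_pow_memr xv.
have /monochromatic_closure[cuv r_au_av] : clos_refl_trans T
    (fun p q => c p = c q /\ dist_le e s p q) (a u) (a v).
  by apply: clos_rt_map ruv => p q [pS qS dpq]; exact: close_a.
have dauav : dist_le e D (a u) (a v).
  by apply: c_bounded cuv _; apply/same_comp_powP; rewrite colour_classE eqxx.
apply: (@dist_le_mono (t + (D + t))); first lia.
exact: dist_le_trans (near_a u uS) (dist_le_trans dauav (dist_le_sym (near_a v vS))).
Qed.

Lemma nbhd_component_diam r i : 3 * r <= s ->
  forall x u v, same_comp_pow e r (nbhd r (colour_class c i)) x u ->
    same_comp_pow e r (nbhd r (colour_class c i)) x v -> dist_le e (D + 2 * r) u v.
Proof.
move=> le3rs; pose N := nbhd r (colour_class c i).
have anchor w : exists a, w \in N -> c a = i /\ dist_le e r w a.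
  case: (boolP (w \in N)) => [|_]; last by exists w.
  by rewrite inE => /asboolP[a]; rewrite colour_classE => /eqP ca dwa; exists a.
have [a near_a] := fin_all_exists anchor.
apply: (anchored_component_diam (a := a)) => [w /near_a[] //|].
move=> x y /near_a[cx dx] /near_a[cy dy] dxy.
split; first by rewrite cx cy.
apply: (@dist_le_mono (r + (r + r))); first lia.
exact: dist_le_trans (dist_le_sym dx) (dist_le_trans dxy dy).
Qed.

(* No vertex of [A_j] outside the r-neighbourhood of [A_i] is r-close to [A_i],
   so the r-components of this union are monochromatic. *)
Lemma separated_component_diam r i j : r <= s ->
  let S := colour_class c i :|: (colour_class c j :\: nbhd r (colour_class c i)) in
  forall x u v, same_comp_pow e r S x u -> same_comp_pow e r S x v -> dist_le e D u v.
Proof.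
move=> lers S x u v xu xv; rewrite -[D]addn0 -(muln0 2).
apply: (@anchored_component_diam r 0 S id _ _ x u v xu xv) => [w _|p q].
  exact: dist_le_refl.
have far p' q' : c p' = i -> q' \notin nbhd r (colour_class c i) -> ~ dist_le e r q' p'.
  move=> cp'; rewrite inE => /asboolPn qfar dqp.
  by apply: qfar; exists p'; rewrite ?colour_classE ?cp'.
rewrite !in_setU !in_setD !colour_classE => Sp Sq dpq; split; last exact: dist_le_mono dpq.
case/orP: Sp => [/eqP cp|/andP[pfar /eqP cp]]; case/orP: Sq => [/eqP cq|/andP[qfar /eqP cq]].
- by rewrite cp cq.
- by case: (far p q cp qfar (dist_le_sym dpq)).
- by case: (far q p cq pfar dpq).
- by rewrite cp cq.
Qed.

End BoundedColouring.

Lemma large_bounded_part d (c : T -> 'I_d.+1) r D : bounded_colouring c (3 * r) D ->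
  forall i, exists S : {set T},
    [/\ colour_class c i \subset S,
        (forall x u v, same_comp_pow e r S x u -> same_comp_pow e r S x v ->
           dist_le e (D + 2 * r) u v) &
        #|T| %/ d.+1 <= #|S|].
Proof.
move=> c_bounded i; pose A := colour_class c; pose N := nbhd r (A i).
have [largeN|smallN] := leqP (#|T| %/ d.+1) #|N|.
  exists N; split=> //; first exact: sub_nbhd.
  exact: (nbhd_component_diam c_bounded (leqnn _)).
have [j large_j] := large_class_outside (sub_nbhd r (A i)) smallN.
exists (A i :|: (A j :\: N)); split.
- exact: subsetUl.
- move=> x u v xu xv; apply: dist_le_mono (leq_addr _ _) _.
  by apply: (separated_component_diam c_bounded _ xu xv); lia.
- by apply: leq_trans large_j _; apply: subset_leq_card; exact: subsetUr.
Qed.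

End Walks.

Theorem mainTheorem13 (cls : graph_class) (d : nat) (f : nat -> nat) :
  asdim_le cls d f ->
  forall (T : finType) (e : rel T), cls T e -> symmetric e -> irreflexive e ->
  forall r : nat, 1 <= r ->
  exists C : 'I_d.+1 -> {set T},
    [/\ (forall x : T, exists i, x \in C i),
        (forall (i : 'I_d.+1) (x u v : T), same_comp_pow e r (C i) x u ->
             same_comp_pow e r (C i) x v -> dist_le e (f (3 * r) + 2 * r) u v) &
        (forall i : 'I_d.+1, #|T| %/ d.+1 <= #|C i|)].
Proof.
move=> asdim T e in_cls e_sym _ r r_gt0.
have [c c_bounded] := asdim T e in_cls (3 * r) (leq_trans r_gt0 (leq_pmull r (isT : 0 < 3))).
have [C HC] := fin_all_exists (large_bounded_part e_sym c_bounded).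
exists C; split=> [x|i|i]; try by case: (HC i).
by exists (c x); case: (HC (c x)) => /subsetP-> //; rewrite colour_classE.
Qed.
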